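(* There exists a set $\mathcal{A} = \{a_1,a_2,a_3,\ldots\}$ of positive integers such that (i) every positive integer $n \notin \{2,3,7,11,15\}$ has a Wilf partition that is a fixed point of the involution $\iota$ and in which every part size and every multiplicity belongs to $\mathcal{A}$; and (ii) $|\mathcal{A} \cap [1,m]| = O(\log m)$ as $m \to \infty$.
   Context: A Wilf partition of a positive integer $n$ is an integer partition of $n$ in which all nonzero multiplicities are distinct. Writing a partition as the set of its part–multiplicity pairs $(p_i,m_i)$ (meaning the part $p_i$ occurs exactly $m_i\ge 1$ times, the $p_i$ being distinct), the involution $\iota$ on Wilf partitions interchanges part sizes and multiplicities, sending the partition with pairs $\{(p_i,m_i)\}$ to the one with pairs $\{(m_i,p_i)\}$. A fixed point of $\iota$ is a Wilf partition such that whenever $(p,m)$ is one of its part–multiplicity pairs, so is $(m,p)$. *)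

From mathcomp Require Import all_boot.
From Stdlib Require Import Rdefinitions Raxioms Rfunctions Rpower.

Set Implicit Arguments.
Unset Strict Implicit.
Unset Printing Implicit Defensive.

(* A partition is encoded by the sequence of its part–multiplicity pairs
   (p, m): part p occurs exactly m times. *)
Definition is_partition_pm (n : nat) (s : seq (nat * nat)) : bool :=
  [&& all (fun pm => (0 < pm.1) && (0 < pm.2)) s,
      uniq (map fst s)
    & \sum_(pm <- s) pm.1 * pm.2 == n].

Definition is_wilf_partition (n : nat) (s : seq (nat * nat)) : bool :=
  is_partition_pm n s && uniq (map snd s).

Definition iota_fixed (s : seq (nat * nat)) : bool :=
  all (fun pm => (pm.2, pm.1) \in s) s.

Definition count_upto (A : pred nat) (m : nat) : nat := count A (iota 1 m).

(* Take for A the integers whose odd part is at most 7, a set closed under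
   doubling with O(log m) elements below m.  Doubling every part and every
   multiplicity of a good partition of n' gives a good partition of 4n'
   using only even numbers; adjoining a fixed odd Wilf partition of 0, 1, 6
   or 19 (with odd parts and multiplicities, hence disjoint from the doubled
   ones) covers every residue class mod 4.  Induction from the base cases
   n < 83, checked by computation, gives all n. *)

From mathcomp Require Import all_boot zify.
From Stdlib Require Import Rdefinitions Raxioms Rfunctions Rpower RIneq Lra.

Definition small_odd_part : pred nat :=
  fun x => (0 < x) && (x %/ expn 2 (logn 2 x) <= 7).

Lemma small_odd_part_double x : small_odd_part (2 * x) = small_odd_part x.
Proof.
rewrite /small_odd_part; case: x => [//|x].
by rewrite lognM // logn_prime // eqxx add1n expnS divnMl.
Qed.

Definition good_partition (A : pred nat) (n : nat) (s : seq (nat * nat)) :=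
  [&& is_wilf_partition n s, iota_fixed s & all (fun pm => A pm.1 && A pm.2) s].

Definition double_pm (s : seq (nat * nat)) : seq (nat * nat) :=
  map (fun pm => (2 * pm.1, 2 * pm.2)) s.

Lemma map_double_pm (f : nat * nat -> nat) s :
  (forall pm, f (2 * pm.1, 2 * pm.2) = 2 * f pm) ->
  map f (double_pm s) = map (muln 2) (map f s).
Proof. by move=> fE; rewrite -!map_comp; apply: eq_map => pm /=; rewrite fE. Qed.

Lemma uniq_map_double (X : seq nat) : uniq (map (muln 2) X) = uniq X.
Proof. by apply: map_inj_uniq => a b /eqP; rewrite eqn_pmul2l // => /eqP. Qed.

Lemma has_odd_map_double (P X : seq nat) :
  all odd P -> has (mem P) (map (muln 2) X) = false.
Proof.
move=> oddP; apply/hasPn => _ /mapP [y _ ->]; apply/negP => /(allP oddP).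
by rewrite oddM.
Qed.

Lemma sum_double_pm s :
  \sum_(pm <- double_pm s) pm.1 * pm.2 = 4 * \sum_(pm <- s) pm.1 * pm.2.
Proof. by rewrite big_map big_distrr; apply: eq_bigr => pm _ /=; lia. Qed.

Lemma uniq_cat_double (X Y : seq nat) :
  all odd X -> uniq (X ++ map (muln 2) Y) = uniq X && uniq Y.
Proof. by move=> oddX; rewrite cat_uniq has_odd_map_double // uniq_map_double. Qed.

Lemma iota_fixed_cat s t : iota_fixed s -> iota_fixed t -> iota_fixed (s ++ t).
Proof.
move=> fs ft; rewrite /iota_fixed all_cat; apply/andP; split.
- by apply: sub_all fs => pm /=; rewrite mem_cat => ->.
- by apply: sub_all ft => pm /=; rewrite mem_cat => ->; rewrite orbT.
Qed.

Lemma iota_fixed_double s : iota_fixed s -> iota_fixed (double_pm s).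
Proof.
move=> fs; rewrite /iota_fixed /double_pm all_map; apply/allP => pm /(allP fs) /=.
exact: (map_f (fun pm => (2 * pm.1, 2 * pm.2))).
Qed.

Section Doubling.

Variable A : pred nat.
Hypothesis A_double : forall x, A (2 * x) = A x.

Lemma good_partition_cat_double k n t s :
  all (fun pm => odd pm.1 && odd pm.2) t ->
  good_partition A k t -> good_partition A n s ->
  good_partition A (k + 4 * n) (t ++ double_pm s).
Proof.
move=> oddt /and3P [/andP [/and3P [post unt sumt] un2t] fixt At].
move=> /and3P [/andP [/and3P [poss uns sums] un2s] fixs As].
have [odd1 odd2] : all odd (map fst t) /\ all odd (map snd t).
  by rewrite !all_map; split; apply: sub_all oddt => pm /andP [].
apply/and3P; split; last first.
- rewrite all_cat At /double_pm all_map.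
  by apply: sub_all As => pm /=; rewrite !A_double.
- exact/iota_fixed_cat/iota_fixed_double.
apply/andP; split; first (apply/and3P; split).
- rewrite all_cat post /double_pm all_map.
  by apply: sub_all poss => pm /= /andP [p1 p2]; rewrite !muln_gt0 p1 p2.
- by rewrite map_cat (map_double_pm fst) // uniq_cat_double // unt.
- by rewrite big_cat sum_double_pm (eqP sumt) (eqP sums).
- by rewrite map_cat (map_double_pm snd) // uniq_cat_double // un2t.
Qed.

End Doubling.

Definition odd_piece (r : nat) : seq (nat * nat) :=
  nth [::] [:: [::]; [:: (1, 1)]; [:: (1, 3); (3, 1)]; [:: (3, 3); (1, 5); (5, 1)]] r.

Definition odd_piece_weight (r : nat) : nat := nth 0 [:: 0; 1; 6; 19] r.

Definition exceptions : seq nat := [:: 2; 3; 7; 11; 15].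

(* [good_partition] with the (locked) big sum replaced by [sumn], so that
   [vm_compute] can decide it. *)
Definition good_partitionb (n : nat) (s : seq (nat * nat)) :=
  [&& all (fun pm => (0 < pm.1) && (0 < pm.2)) s, uniq (map fst s),
      sumn (map (fun pm => pm.1 * pm.2) s) == n, uniq (map snd s),
      iota_fixed s & all (fun pm => small_odd_part pm.1 && small_odd_part pm.2) s].

Lemma good_partitionbE n s : good_partitionb n s = good_partition small_odd_part n s.
Proof.
by rewrite /good_partitionb /good_partition /is_wilf_partition /is_partition_pm
  sumnE big_map -!andbA.
Qed.

Lemma odd_piece_good {r} : r < 4 ->
  all (fun pm => odd pm.1 && odd pm.2) (odd_piece r) /\
  good_partition small_odd_part (odd_piece_weight r) (odd_piece r).
Proof. by rewrite -good_partitionbE; case: r => [|[|[|[|]]]]. Qed.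

Definition small_solutions : seq (seq (nat * nat)) := [:: [::];
 [::(1,1)];
 [::];
 [::];
 [::(1,2);(2,1)];
 [::(1,1);(2,2)];
 [::(1,3);(3,1)];
 [::];
 [::(1,4);(4,1)];
 [::(3,3)];
 [::(1,1);(3,3)];
 [::];
 [::(1,4);(4,1);(2,2)];
 [::(1,1);(2,3);(3,2)];
 [::(1,1);(2,2);(3,3)];
 [::];
 [::(1,6);(6,1);(2,2)];
 [::(1,1);(2,4);(4,2)];
 [::(1,7);(7,1);(2,2)];
 [::(1,5);(5,1);(3,3)];
 [::(1,2);(2,1);(4,4)];
 [::(1,1);(2,2);(4,4)];
 [::(1,3);(3,1);(2,4);(4,2)];
 [::(1,5);(5,1);(2,2);(3,3)];
 [::(1,6);(6,1);(2,3);(3,2)];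
 [::(1,1);(2,6);(6,2)];
 [::(1,1);(2,4);(4,2);(3,3)];
 [::(1,7);(7,1);(2,2);(3,3)];
 [::(1,2);(2,1);(3,4);(4,3)];
 [::(1,1);(2,2);(3,4);(4,3)];
 [::(1,1);(2,2);(3,3);(4,4)];
 [::(1,1);(3,5);(5,3)];
 [::(1,4);(4,1);(2,6);(6,2)];
 [::(1,1);(2,8);(8,2)];
 [::(1,1);(2,6);(6,2);(3,3)];
 [::(1,1);(2,2);(3,5);(5,3)];
 [::(1,4);(4,1);(2,7);(7,2)];
 [::(1,1);(2,5);(5,2);(4,4)];
 [::(1,1);(2,3);(3,2);(5,5)];
 [::(1,1);(2,2);(3,3);(5,5)];
 [::(1,2);(2,1);(3,6);(6,3)];
 [::(1,1);(2,2);(3,6);(6,3)];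
 [::(1,1);(2,4);(4,2);(5,5)];
 [::(1,1);(3,7);(7,3)];
 [::(1,2);(2,1);(4,5);(5,4)];
 [::(1,1);(2,2);(4,5);(5,4)];
 [::(1,1);(2,2);(4,4);(5,5)];
 [::(1,1);(2,2);(3,7);(7,3)];
 [::(1,4);(4,1);(2,2);(3,6);(6,3)];
 [::(1,1);(2,3);(3,2);(6,6)];
 [::(1,1);(2,2);(3,3);(6,6)];
 [::(1,1);(2,2);(3,5);(5,3);(4,4)];
 [::(1,2);(2,1);(3,8);(8,3)];
 [::(1,1);(2,2);(3,8);(8,3)];
 [::(1,1);(2,2);(3,3);(4,5);(5,4)];
 [::(1,1);(2,2);(3,3);(4,4);(5,5)];
 [::(1,2);(2,1);(3,6);(6,3);(4,4)];
 [::(1,1);(2,2);(3,6);(6,3);(4,4)];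
 [::(1,1);(2,8);(8,2);(3,3);(4,4)];
 [::(1,1);(2,4);(4,2);(3,7);(7,3)];
 [::(1,2);(2,1);(4,7);(7,4)];
 [::(1,1);(2,2);(4,7);(7,4)];
 [::(1,1);(2,2);(3,3);(4,6);(6,4)];
 [::(1,1);(2,2);(3,3);(7,7)];
 [::(1,2);(2,1);(3,4);(4,3);(6,6)];
 [::(1,1);(2,2);(3,4);(4,3);(6,6)];
 [::(1,1);(2,2);(3,3);(4,4);(6,6)];
 [::(1,1);(2,6);(6,2);(3,7);(7,3)];
 [::(1,1);(3,7);(7,3);(5,5)];
 [::(1,1);(2,2);(3,8);(8,3);(4,4)];
 [::(1,1);(2,2);(3,3);(4,7);(7,4)];
 [::(1,1);(2,2);(3,5);(5,3);(6,6)];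
 [::(1,1);(2,2);(3,7);(7,3);(5,5)];
 [::(1,1);(2,3);(3,2);(5,6);(6,5)];
 [::(1,1);(2,2);(3,3);(5,6);(6,5)];
 [::(1,1);(2,2);(3,3);(5,5);(6,6)];
 [::(1,2);(2,1);(3,12);(12,3)];
 [::(1,1);(2,2);(3,12);(12,3)];
 [::(1,1);(2,2);(3,3);(4,8);(8,4)];
 [::(1,1);(2,2);(3,3);(4,4);(7,7)];
 [::(1,1);(3,3);(5,7);(7,5)];
 [::(1,1);(2,2);(3,6);(6,3);(4,5);(5,4)];
 [::(1,1);(2,2);(3,6);(6,3);(4,4);(5,5)]].

Lemma small_solutions_good n : 0 < n < 83 -> n \notin exceptions ->
  good_partition small_odd_part n (nth [::] small_solutions n).
Proof.
have table_ok : all (fun n => (n \in exceptions) ||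
                   good_partitionb n (nth [::] small_solutions n)) (iota 1 82).
  by vm_compute.
move=> n_range n_exc; rewrite -good_partitionbE.
have /allP/(_ n) := table_ok; rewrite mem_iota (negbTE n_exc); apply; lia.
Qed.

Lemma split_mod4 {n} : 83 <= n ->
  exists r n', [/\ r < 4, n = odd_piece_weight r + 4 * n' & 16 <= n'].
Proof.
move=> n_ge; rewrite (divn_eq n 4) in n_ge *.
have : n %% 4 < 4 by rewrite ltn_mod.
case: (n %% 4) => [|[|[|[|//]]]] _ /=.
- by exists 0, (n %/ 4); split; rewrite /odd_piece_weight /=; lia.
- by exists 1, (n %/ 4); split; rewrite /odd_piece_weight /=; lia.
- by exists 2, (n %/ 4).-1; split; rewrite /odd_piece_weight /=; lia.
- by exists 3, (n %/ 4 - 4); split; rewrite /odd_piece_weight /=; lia.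
Qed.

Lemma exists_good_partition {n} : 0 < n -> n \notin exceptions ->
  exists s, good_partition small_odd_part n s.
Proof.
elim/ltn_ind: n => n IH n_gt0 n_exc.
have [n_lt|n_ge] := ltnP n 83.
  by exists (nth [::] small_solutions n); apply: small_solutions_good; lia.
have [r [n' [r_lt n_eq n'_ge]]] := split_mod4 n_ge.
have n'_exc : n' \notin exceptions by rewrite !inE; apply/negP; lia.
have [s good_s] := IH n' ltac:(lia) ltac:(lia) n'_exc.
have [odd_t good_t] := odd_piece_good r_lt.
exists (odd_piece r ++ double_pm s); rewrite n_eq.
exact: good_partition_cat_double small_odd_part_double _ _ _ _ odd_t good_t good_s.
Qed.

(* Every element of [small_odd_part] up to [m] is [o * 2^k] with [o < 8] and
   [2^k <= m]. *)
Lemma count_small_odd_part m :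
  count_upto small_odd_part m <= 8 * (trunc_log 2 m).+1.
Proof.
rewrite /count_upto -size_filter.
set t := trunc_log 2 m.
have -> : 8 * t.+1 = size [seq o * expn 2 k | o <- iota 0 8, k <- iota 0 t.+1].
  by rewrite size_allpairs !size_iota.
apply: uniq_leq_size; first exact: filter_uniq (iota_uniq _ _).
move=> x; rewrite mem_filter mem_iota => /andP [/andP [x_gt0 odd_le7] /andP [_ x_le]].
have pow_dvd : expn 2 (logn 2 x) %| x by rewrite -p_part dvdn_part.
have pow_le : expn 2 (logn 2 x) <= m by have := dvdn_leq x_gt0 pow_dvd; lia.
have := trunc_log_max (isT : 1 < 2) pow_le; rewrite -/t => log_lt.
rewrite -(divnK pow_dvd); apply: (allpairs_f (fun o k => o * expn 2 k)); rewrite mem_iota; lia.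
Qed.

Lemma Nat_pow_expn m n : Nat.pow m n = expn m n.
Proof. by elim: n => //= n IH; rewrite expnS IH. Qed.

Lemma trunc_log_ln {m} : 0 < m -> (INR (trunc_log 2 m) * ln 2 <= ln (INR m))%R.
Proof.
move=> m_gt0; have := trunc_logP (isT : 1 < 2) m_gt0.
rewrite -ln_pow; last lra.
have INR2 : INR 2 = 2%R by rewrite /=; lra.
rewrite -Nat_pow_expn => /leP /le_INR; rewrite pow_INR INR2 => pow_le.
have [pow_lt_m | <-] := Rle_lt_or_eq_dec _ _ pow_le; last lra.
by left; apply: ln_increasing => //; apply: pow_lt; lra.
Qed.

Theorem lemma2 :
  exists A : pred nat,
    (forall a, A a -> 0 < a) /\
    (forall n, 0 < n -> n \notin [:: 2; 3; 7; 11; 15] ->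
       exists s : seq (nat * nat),
         [/\ is_wilf_partition n s, iota_fixed s
           & all (fun pm => A pm.1 && A pm.2) s]) /\
    (exists (C : R) (M : nat), forall m : nat, (M <= m)%N ->
       Rle (INR (count_upto A m)) (Rmult C (ln (INR m)))).
Proof.
exists small_odd_part; split; first by move=> a /andP [].
split.
  move=> n n_gt0 n_exc; have [s /and3P good_s] := exists_good_partition n_gt0 n_exc.
  by exists s.
exists 32%R, 2 => m m_ge.
have t_gt0 : 0 < trunc_log 2 m by rewrite trunc_log_gt0.
have count_le : (INR (count_upto small_odd_part m) <= 16 * INR (trunc_log 2 m))%R.
  have -> : 16%R = INR 16 by rewrite /= ; lra.
  rewrite -mult_INR; apply/le_INR/leP.
  by have := count_small_odd_part m; lia.
have := trunc_log_ln (ltnW m_ge); have := ln_lt_2; have := pos_INR (trunc_log 2 m).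
nra.
Qed.
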